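(* Let $\mathfrak{G}=(Y,R,E)$ be a descriptive $\mathsf{MS4}$-frame, $\rho\mathfrak{G}=(X,R',Q')$ its skeleton and $\pi:Y\to X$ the quotient map. Then (1) $\pi^{-1}[\max X]=\operatorname{qmax}Y$; (2) $\pi^{-1}[E_{Q'}[A]]=E_Q[\pi^{-1}[A]]$ for every $A\subseteq X$; (3) $\pi^{-1}[E_{Q'}[\max X]]=E_Q[\operatorname{qmax}Y]$.
   Context: A descriptive $\mathsf{MS4}$-frame is $(Y,R,E)$ with $Y$ a Stone space, $R$ a continuous quasi-order, $E$ a continuous equivalence relation (continuous: $R[x]=\{y:xRy\}$ closed for all $x$, $R^{-1}[U]$ clopen for clopen $U$), such that $xEy$, $yRz$ imply $\exists u$ with $xRu$, $uEz$. $Q=E\circ R$: $xQy$ iff $\exists z$ with $xRz$, $zEy$. Skeleton: with $xE_Ry$ iff $xRy$ and $yRx$, $X=Y/E_R$, $\pi$ the quotient map, $\pi(x)R'\pi(y)$ iff $xRy$, $\pi(x)Q'\pi(y)$ iff $xQy$. For a quasi-order $S$, $E_S$ is the equivalence $xE_Sy$ iff $xSy$ and $ySx$; $S[A]=\{y:\exists a\in A,\ aSy\}$. $\max X=\{x: xR'y\Rightarrow x=y\}$, $\operatorname{qmax}Y=\{x: xRy\Rightarrow yRx\}$. *)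

From mathcomp Require Import all_boot all_order.
From mathcomp Require Import all_classical all_reals all_analysis.
Unset Printing Implicit Defensive.
Local Open Scope classical_set_scope.

Definition stone_space (Y : topologicalType) : Prop :=
  [/\ compact [set: Y], hausdorff_space Y & zero_dimensional Y].

Definition quasi_order {T : Type} (S : T -> T -> Prop) : Prop :=
  (forall x, S x x) /\ (forall x y z, S x y -> S y z -> S x z).

Definition equivalence_rel {T : Type} (S : T -> T -> Prop) : Prop :=
  (forall x, S x x) /\ (forall x y, S x y -> S y x) /\
  (forall x y z, S x y -> S y z -> S x z).

Definition rimg {T : Type} (S : T -> T -> Prop) (A : set T) : set T :=
  [set y | exists2 a, A a & S a y].

Definition rpreimg {T : Type} (S : T -> T -> Prop) (U : set T) : set T :=
  [set x | exists2 y, U y & S x y].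

Definition continuous_rel {Y : topologicalType} (S : Y -> Y -> Prop) : Prop :=
  (forall x, closed [set y | S x y]) /\
  (forall U : set Y, clopen U -> clopen (rpreimg S U)).

Definition E_of {T : Type} (S : T -> T -> Prop) (x y : T) : Prop := S x y /\ S y x.

Definition descriptive_MS4_frame (Y : topologicalType) (R E : Y -> Y -> Prop) : Prop :=
  stone_space Y /\ quasi_order R /\ continuous_rel R /\
  equivalence_rel E /\ continuous_rel E /\
  (forall x y z, E x y -> R y z -> exists u, R x u /\ E u z).

Definition Qrel {Y : Type} (R E : Y -> Y -> Prop) (x y : Y) : Prop :=
  exists z, R x z /\ E z y.

(* Skeleton carrier X = Y / E_R, realised as the set of E_R-classes *)
Definition skel {Y : Type} (R : Y -> Y -> Prop) : Type :=
  {A : set Y | exists y, A = E_of R y}.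

Definition skel_pi {Y : Type} (R : Y -> Y -> Prop) (y : Y) : skel R :=
  exist _ (E_of R y) (ex_intro _ y erefl).

Definition skel_lift {Y : Type} (R : Y -> Y -> Prop) (S : Y -> Y -> Prop)
  (x x' : skel R) : Prop :=
  exists a b, x = skel_pi R a /\ x' = skel_pi R b /\ S a b.

Definition skel_R {Y : Type} (R : Y -> Y -> Prop) : skel R -> skel R -> Prop :=
  skel_lift R R.

Definition skel_Q {Y : Type} (R E : Y -> Y -> Prop) : skel R -> skel R -> Prop :=
  skel_lift R (Qrel R E).

Definition maxX {Y : Type} (R : Y -> Y -> Prop) : set (skel R) :=
  [set x | forall y, skel_R R x y -> x = y].

Definition qmax {Y : Type} (R : Y -> Y -> Prop) : set Y :=
  [set x | forall y, R x y -> R y x].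

(* Only the quasi-order axioms of R and the commutation E;R ⊆ R;E matter.
   They make both R and Q = E∘R invariant under R^-1 on the left and R on the
   right, so both descend to the skeleton and pi reflects them; the three
   identities then follow by unfolding preimages along the surjection pi. *)
From mathcomp Require Import all_boot all_order.
From mathcomp Require Import all_classical all_reals all_analysis.
Local Open Scope classical_set_scope.

Section Skeleton.
Context {Y : Type} (R : Y -> Y -> Prop).
Hypothesis R_qo : quasi_order R.

Definition R_saturated (S : Y -> Y -> Prop) : Prop :=
  forall a a' b b', R a' a -> R b b' -> S a b -> S a' b'.

Lemma R_saturated_R : R_saturated R.
Proof. by case: R_qo => _ tr a a' b b' a'a bb' ab; apply: tr (tr _ _ _ ab bb'). Qed.

Lemma skel_pi_eq a b : R a b -> R b a -> skel_pi R a = skel_pi R b.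
Proof.
move=> ab ba; apply: eq_sig_hprop => [x p q|/=]; first exact: Prop_irrelevance.
case: R_qo => _ tr; apply/funext => y; apply/propext.
by split=> -[h1 h2]; split; eauto.
Qed.

Lemma skel_pi_eqE a b : skel_pi R a = skel_pi R b -> E_of R a b.
Proof.
move=> /(congr1 (@proj1_sig _ _)) /= eab.
have Eaa : E_of R a a by case: R_qo => rf _; split; apply: rf.
by rewrite eab in Eaa; case: Eaa.
Qed.

Lemma skel_pi_surj (x : skel R) : exists b, x = skel_pi R b.
Proof.
case: x => A [b eA]; exists b.
by apply: eq_sig_hprop => // x p q; apply: Prop_irrelevance.
Qed.

Lemma skel_liftE {S : Y -> Y -> Prop} : R_saturated S -> forall a b,
  skel_lift R S (skel_pi R a) (skel_pi R b) <-> S a b.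
Proof.
move=> satS a b; split; last by move=> ab; exists a, b.
move=> [a' [b' [/skel_pi_eqE [aa' _] [/skel_pi_eqE [_ b'b] Sa'b']]]].
exact: satS aa' b'b Sa'b'.
Qed.

Lemma preimage_maxX : skel_pi R @^-1` maxX R = qmax R.
Proof.
apply/funext => a; apply/propext; split=> [maxa b ab | qmaxa y].
- have /skel_pi_eqE [] // :=
    maxa (skel_pi R b) (proj2 (skel_liftE R_saturated_R _ _) ab).
- have [b ->] := skel_pi_surj y.
  move=> /(skel_liftE R_saturated_R) ab.
  exact: skel_pi_eq ab (qmaxa _ ab).
Qed.

Lemma preimage_rimg_E_of_skel_lift S (A : set (skel R)) : R_saturated S ->
  skel_pi R @^-1` rimg (E_of (skel_lift R S)) A =
  rimg (E_of S) (skel_pi R @^-1` A).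
Proof.
move=> satS; apply/funext => a; apply/propext; split.
- move=> [x Ax [ax xa]]; have [b eb] := skel_pi_surj x; subst x.
  by exists b => //; split; apply/(skel_liftE satS).
- move=> [b Ab [ab ba]]; exists (skel_pi R b) => //.
  by split; apply/(skel_liftE satS).
Qed.

End Skeleton.

Lemma Qrel_R_saturated {Y : Type} {R E : Y -> Y -> Prop} :
  quasi_order R -> (forall x y z, E x y -> R y z -> exists u, R x u /\ E u z) ->
  R_saturated R (Qrel R E).
Proof.
move=> [_ tr] ER_sub_RE a a' b b' a'a bb' [z [az zb]].
have [u [zu ub']] := ER_sub_RE _ _ _ zb bb'.
by exists u; split; [apply: tr a'a (tr _ _ _ az zu) | ].
Qed.

Theorem lemma3p11 (Y : topologicalType) (R E : Y -> Y -> Prop) :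
  descriptive_MS4_frame Y R E ->
  [/\ skel_pi R @^-1` maxX R = qmax R,
      (forall A : set (skel R),
         skel_pi R @^-1` rimg (E_of (skel_Q R E)) A =
         rimg (E_of (Qrel R E)) (skel_pi R @^-1` A)) &
      skel_pi R @^-1` rimg (E_of (skel_Q R E)) (maxX R) =
      rimg (E_of (Qrel R E)) (qmax R)].
Proof.
move=> [_ [R_qo [_ [_ [_ ER_sub_RE]]]]].
have satQ := Qrel_R_saturated R_qo ER_sub_RE.
have pre_EQ A := preimage_rimg_E_of_skel_lift _ R_qo _ A satQ.
have pre_max := preimage_maxX _ R_qo.
split; [exact: pre_max | exact: pre_EQ |].
by rewrite pre_EQ pre_max.
Qed.
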